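(* Let $n\ge 2$ and let $\mathcal{D}\subseteq\mathcal{M}_{d\times d}(\mathbb{C})$ be the algebra of diagonal matrices. If $\mathcal{A}$ is a maximal subalgebra of $\mathcal{T}_{n,d}(\mathcal{D})$ (an algebra contained in $\mathcal{T}_{n,d}(\mathcal{D})$ not properly contained in any other algebra contained in $\mathcal{T}_{n,d}(\mathcal{D})$), then $\mathcal{A}=\mathcal{F}_{A,B}^{\mathcal{D}}$ for some $A,B\in\mathcal{D}$.
   Context: For positive integers $n,d$, $\mathcal{T}_{n,d}$ denotes the set of block Toeplitz matrices $\mathbf{T}=(T_{p-q})_{p,q=0}^{n-1}$: $nd\times nd$ complex matrices partitioned into $n\times n$ blocks of size $d\times d$, whose $(p,q)$ block is $T_{p-q}$ for some $T_{-(n-1)},\dots,T_{n-1}\in\mathcal{M}_{d\times d}(\mathbb{C})$. For a subalgebra $\mathcal{B}\subseteq\mathcal{M}_{d\times d}(\mathbb{C})$, $\mathcal{T}_{n,d}(\mathcal{B})$ is the set of $\mathbf{T}\in\mathcal{T}_{n,d}$ with all $T_j\in\mathcal{B}$. An algebra contained in a set of matrices is a subset that is a linear subspace closed under matrix multiplication. For $A,B\in\mathcal{M}_{d\times d}(\mathbb{C})$, $$\mathcal{F}_{A,B}^{\mathcal{B}}=\{(T_{p-q})_{p,q=0}^{n-1}\in\mathcal{T}_{n,d}(\mathcal{B}) : AT_j=BT_{j-n}\text{ for } j=1,2,\dots,n-1\}.$$ *)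

From HB Require Import structures.
From mathcomp Require Import all_boot all_order all_algebra.
Set Implicit Arguments. Unset Strict Implicit. Unset Printing Implicit Defensive.
Import Order.TTheory GRing.Theory Num.Theory.
Local Open Scope ring_scope.

(* Index of the (r)-th row inside the p-th block row of an nd x nd matrix:
   the natural number p * d + r. *)
Lemma blk_idx_subproof (n d : nat) (p : 'I_n) (r : 'I_d) : (p * d + r < n * d)%N.
Proof.
have h1 : (p * d + r < p.+1 * d)%N by rewrite mulSn [(d + _)%N]addnC ltn_add2l.
by apply: (leq_trans h1); rewrite leq_mul2r ltn_ord orbT.
Qed.

Definition blk_idx (n d : nat) (p : 'I_n) (r : 'I_d) : 'I_(n * d) :=
  Ordinal (blk_idx_subproof p r).

Definition diag_alg (C : numClosedFieldType) (d : nat) (X : 'M[C]_d) : Prop :=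
  is_diag_mx X.

Definition block_toeplitz_with (C : numClosedFieldType) (n d : nat)
    (T : int -> 'M[C]_d) (M : 'M[C]_(n * d)) : Prop :=
  forall (p q : 'I_n) (r s : 'I_d),
    M (blk_idx p r) (blk_idx q s) = T (p%:Z - q%:Z) r s.

Definition toeplitz_in (C : numClosedFieldType) (n d : nat)
    (B : 'M[C]_d -> Prop) (M : 'M[C]_(n * d)) : Prop :=
  exists T : int -> 'M[C]_d,
    (forall j : int, (- (n%:Z - 1) <= j <= n%:Z - 1) -> B (T j)) /\
    block_toeplitz_with T M.

Definition F_set (C : numClosedFieldType) (n d : nat)
    (Bs : 'M[C]_d -> Prop) (A B : 'M[C]_d) (M : 'M[C]_(n * d)) : Prop :=
  exists T : int -> 'M[C]_d,
    (forall j : int, (- (n%:Z - 1) <= j <= n%:Z - 1) -> Bs (T j)) /\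
    block_toeplitz_with T M /\
    (forall j : nat, (1 <= j <= n - 1)%N -> A *m T j%:Z = B *m T (j%:Z - n%:Z)).

Definition algebra_in (C : numClosedFieldType) (N : nat)
    (S : 'M[C]_N -> Prop) (Al : 'M[C]_N -> Prop) : Prop :=
  (forall X, Al X -> S X) /\
  Al 0 /\
  (forall (a : C) X Y, Al X -> Al Y -> Al (a *: X + Y)) /\
  (forall X Y, Al X -> Al Y -> Al (X *m Y)).

Definition maximal_algebra_in (C : numClosedFieldType) (N : nat)
    (S : 'M[C]_N -> Prop) (Al : 'M[C]_N -> Prop) : Prop :=
  algebra_in S Al /\
  forall Al' : 'M[C]_N -> Prop, algebra_in S Al' ->
    (forall X, Al X -> Al' X) -> (forall X, Al' X -> Al X).

From HB Require Import structures.
From mathcomp Require Import all_boot all_order all_algebra.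
From mathcomp Require Import zify ring.
From Stdlib Require Import Classical.
Import Order.TTheory GRing.Theory Num.Theory.
Set Implicit Arguments. Unset Strict Implicit. Unset Printing Implicit Defensive.
Local Open Scope ring_scope.

(* Since all blocks are diagonal, an element of T_{n,d}(D) is, up to a
   permutation of coordinates, the direct sum of d scalar n x n Toeplitz
   matrices (its slices), and products are computed slice by slice.
   For scalar Toeplitz matrices with symbols x and y, consecutive entries along
   a diagonal of the product differ by x_i y_{j-n} - x_{i-n} y_j, so the product
   is Toeplitz iff x_i y_{j-n} = x_{i-n} y_j for all 0 < i, j < n.  Hence a
   multiplicatively closed set of Toeplitz matrices lies in some F_{a,b} with
   (a, b) <> (0, 0): take (a, b) = (x_{i-n}, x_i) for any element and index
   where this pair is nonzero, and (1, 0) if there is none.  Conversely, for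
   (a, b) <> (0, 0) the Toeplitz matrices of F_{a,b} are those commuting with
   the skew shift (b on the subdiagonal, a in the corner), so F_{a,b} is closed
   under products.  Slice by slice this gives diagonal A, B such that the
   algebra F_{A,B}^D contains the maximal algebra, hence equals it.  The
   argument only needs n >= 1. *)

Section ScalarToeplitz.
Variables (R : comNzRingType) (m : nat).
Implicit Types (x y t : int -> R) (a b : R) (X Y N : 'M[R]_m.+1).

Definition toep t : 'M[R]_m.+1 := \matrix_(p, q) t (p%:Z - q%:Z).

Definition toeplitz N := exists t, N = toep t.

Definition cross_cond x y := forall i j : nat, (0 < i <= m)%N -> (0 < j <= m)%N ->
  x i%:Z * y (j%:Z - m.+1%:Z) = x (i%:Z - m.+1%:Z) * y j%:Z.

Definition F_cond a b t := forall j : nat, (0 < j <= m)%N ->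
  a * t j%:Z = b * t (j%:Z - m.+1%:Z).

Definition in_F a b N := exists t, N = toep t /\ F_cond a b t.

Lemma toep_inord t p q : (p <= m)%N -> (q <= m)%N ->
  toep t (inord p) (inord q) = t (p%:Z - q%:Z).
Proof. by move=> pm qm; rewrite mxE !inordK. Qed.

Lemma toep_mul_shift x y p q : (p < m)%N -> (q < m)%N ->
  (toep x *m toep y) (inord p.+1) (inord q.+1) - (toep x *m toep y) (inord p) (inord q)
  = x p.+1%:Z * y (- q.+1%:Z) - x (p.+1%:Z - m.+1%:Z) * y (m.+1%:Z - q.+1%:Z).
Proof.
move=> pm qm; pose h (k : nat) := x (p.+1%:Z - k%:Z) * y (k%:Z - q.+1%:Z).
have -> : (toep x *m toep y) (inord p) (inord q) = \sum_(k < m.+1) h k.+1.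
  rewrite mxE; apply: eq_bigr => k _; rewrite !mxE !inordK /h; [congr (x _ * y _)|..]; lia.
rewrite mxE (eq_bigr (fun k : 'I_m.+1 => h k)); last first.
  by move=> k _; rewrite !mxE !inordK //; lia.
rewrite big_ord_recl big_ord_recr /= /h subr0 sub0r; ring.
Qed.

Lemma toeplitz_shiftP N : toeplitz N <->
  forall p q, (p < m)%N -> (q < m)%N -> N (inord p.+1) (inord q.+1) = N (inord p) (inord q).
Proof.
split=> [[t ->] p q pm qm | shiftN].
  by rewrite !toep_inord; [congr t|..]; lia.
have shift s p q : (p + s <= m)%N -> (q + s <= m)%N ->
    N (inord (p + s)) (inord (q + s)) = N (inord p) (inord q).
  elim: s p q => [|s IH] p q hp hq; first by rewrite !addn0.
  by rewrite !addnS shiftN; [apply: IH|..]; lia.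
exists (fun k => if 0 <= k then N (inord `|k|%N) (inord 0) else N (inord 0) (inord `|k|%N)).
apply/matrixP => p q; have := ltn_ord p; have := ltn_ord q; rewrite mxE.
have [qp|pq] := leqP q p => qm pm.
- rewrite ifT; last by lia.
  have -> : `|p%:Z - q%:Z|%N = (p - q)%N by lia.
  by rewrite -(shift q) ?subnK ?add0n ?inord_val //; lia.
- rewrite ifF; last by lia.
  have -> : `|p%:Z - q%:Z|%N = (q - p)%N by lia.
  by rewrite -(shift p) ?subnK ?add0n ?inord_val ?(ltnW pq) //; lia.
Qed.

Lemma toeplitz_toep_mulP x y : toeplitz (toep x *m toep y) <-> cross_cond x y.
Proof.
rewrite toeplitz_shiftP; split=> [shift i j /andP[i0 im] /andP[j0 jm] | cross p q pm qm].
- have := toep_mul_shift x y (p := i.-1) (q := m - j) ltac:(lia) ltac:(lia).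
  rewrite shift; [|lia|lia]; rewrite subrr prednK // -subSn // => /eqP.
  rewrite eq_sym subr_eq0 => /eqP.
  have -> : m.+1%:Z - (m.+1 - j)%N%:Z = j%:Z by lia.
  by have -> : - (m.+1 - j)%N%:Z = j%:Z - m.+1%:Z by lia.
- apply/eqP; rewrite -subr_eq0 toep_mul_shift //.
  have := cross p.+1 (m - q)%N ltac:(lia) ltac:(lia).
  have -> : (m - q)%N%:Z - m.+1%:Z = - q.+1%:Z by lia.
  have -> : m.+1%:Z - q.+1%:Z = (m - q)%N%:Z by lia.
  by move=> ->; rewrite subrr.
Qed.

Definition skew_shift a b : 'M[R]_m.+1 :=
  \matrix_(p, q) ((if (p : nat) == q.+1 then b else 0) +
                  (if ((p : nat) == 0%N) && ((q : nat) == m) then a else 0)).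

Lemma mul_mx_skew_shift X a b p q : (X *m skew_shift a b) p q =
  (if (q < m)%N then X p (inord q.+1) * b else 0) + (if (q : nat) == m then X p ord0 * a else 0).
Proof.
rewrite mxE; under eq_bigr do rewrite mxE mulrDr.
rewrite big_split /=; have ql := ltn_ord q; congr (_ + _).
- case: ifP => hq.
  + rewrite (big_only1 (inord q.+1)) ?inordK ?eqxx // => k kq _.
    rewrite ifN ?mulr0 //; apply: contra kq => /eqP e; apply/eqP/val_inj.
    by rewrite /= inordK ?e.
  + rewrite big1 // => k _; rewrite ifN ?mulr0 //; have := ltn_ord k; lia.
- case: eqP => hq.
  + rewrite (big_only1 ord0) /= ?hq ?eqxx // => k k0 _.
    rewrite ifN ?mulr0 //; apply: contra k0 => /andP[/eqP e _]; apply/eqP/val_inj.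
    by rewrite /= e.
  + by rewrite big1 // => k _; rewrite ifN ?mulr0 //; apply/negP => /andP[_ /eqP].
Qed.

Lemma mul_skew_shift_mx X a b p q : (skew_shift a b *m X) p q =
  (if (0 < p)%N then b * X (inord p.-1) q else 0) + (if (p : nat) == 0%N then a * X ord_max q else 0).
Proof.
rewrite mxE; under eq_bigr do rewrite mxE mulrDl.
rewrite big_split /=; have pl := ltn_ord p; congr (_ + _).
- case: ifP => hp.
  + rewrite (big_only1 (inord p.-1)) //.
      by rewrite inordK ?prednK ?eqxx //; lia.
    move=> k kp _; rewrite ifN ?mul0r //; apply: contra kp => /eqP e; apply/eqP/val_inj.
    rewrite /= inordK e //; lia.
  + rewrite big1 // => k _; rewrite ifN ?mul0r //; lia.
- case: (eqVneq (p : nat) 0%N) => hp.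
  + rewrite (big_only1 ord_max) /= ?hp ?eqxx // => k k0 _.
    case: eqP => [e|]; last by rewrite mul0r.
    by case/negP: k0; apply/eqP/val_inj; rewrite /= e.
  + by rewrite big1 // => k _; rewrite /= ?(negbTE hp) /= mul0r.
Qed.

Lemma F_cond_commP a b t : F_cond a b t <-> toep t *m skew_shift a b = skew_shift a b *m toep t.
Proof.
split.
- move=> Ft; apply/matrixP => p q; rewrite mul_mx_skew_shift mul_skew_shift_mx !mxE.
  have pl := ltn_ord p; have ql := ltn_ord q.
  case: (posnP p) => p0; case: (ltngtP q m) => qm /=; try lia.
  + rewrite inordK ?ltnS // addr0 add0r.
    have -> : m%:Z - q%:Z = (m - q)%N%:Z by lia.
    rewrite (Ft (m - q)%N); [|lia]; rewrite mulrC; congr (_ * t _); lia.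
  + rewrite add0r add0r mulrC; congr (_ * t _); lia.
  + rewrite inordK ?ltnS // !addr0 mulrC inordK; [|lia]; congr (_ * t _); lia.
  + rewrite add0r addr0 mulrC; transitivity (a * t p%:Z); first by congr (_ * t _); lia.
    rewrite (Ft p); [|lia]; rewrite inordK; [|lia]; rewrite addr0; congr (_ * t _); lia.
- move=> comm j /andP[j0 jm].
  have := congr1 (fun M : 'M[R]_m.+1 => M ord0 (inord (m - j)%N)) comm.
  rewrite /= mul_mx_skew_shift mul_skew_shift_mx /= !mxE inordK; [|lia].
  rewrite ifT; [|lia]; rewrite ifF; [|apply/negbTE; lia].
  rewrite !addr0 !add0r => e.
  transitivity (a * t ((ord_max : 'I_m.+1)%:Z - (m - j)%N%:Z)); first by congr (_ * t _); rewrite /=; lia.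
  rewrite -e mulrC; congr (_ * t _); rewrite inordK; lia.
Qed.

Lemma toeplitz_mul_F_cond x y i : toeplitz (toep x *m toep y) -> (0 < i <= m)%N ->
  F_cond (x (i%:Z - m.+1%:Z)) (x i%:Z) y.
Proof. by move=> /toeplitz_toep_mulP cross im j jm; rewrite -cross. Qed.

Lemma mul_closed_toeplitz_sub_F (S : 'M[R]_m.+1 -> Prop) :
  (forall X, S X -> toeplitz X) -> (forall X Y, S X -> S Y -> toeplitz (X *m Y)) ->
  exists a b, ((a != 0) || (b != 0)) /\ forall X, S X -> in_F a b X.
Proof.
move=> S_toep S_mul.
have [[x [i [Sx [im xi_nz]]]] | S_band] := classic (exists x i,
  S (toep x) /\ (0 < i <= m)%N /\ ((x (i%:Z - m.+1%:Z) != 0) || (x i%:Z != 0))).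
- exists (x (i%:Z - m.+1%:Z)), (x i%:Z); split => // X SX.
  have [y Xy] := S_toep X SX; exists y; split => //.
  by apply: toeplitz_mul_F_cond im; rewrite -Xy; apply: S_mul.
- exists 1, 0; rewrite oner_neq0; split => // X SX.
  have [y Xy] := S_toep X SX; exists y; split => // j jm.
  rewrite mul1r mul0r; apply/eqP/negPn/negP => yj_nz.
  by apply: S_band; exists y, j; rewrite -Xy yj_nz orbT.
Qed.

End ScalarToeplitz.

Arguments toep {R m} t.
Arguments skew_shift {R m} a b.

Section ScalarToeplitzDomain.
Variables (R : idomainType) (m : nat).
Implicit Types (x y : int -> R) (a b : R) (X Y : 'M[R]_m.+1).

Lemma F_cond_cross a b x y : (a != 0) || (b != 0) ->
  F_cond m a b x -> F_cond m a b y -> cross_cond m x y.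
Proof.
move=> ab Fx Fy i j im jm; move: (Fx i im) (Fy j jm).
set xi := x i%:Z; set xi' := x _; set yj := y j%:Z; set yj' := y _ => exi eyj.
have a_cross : a * (xi * yj' - xi' * yj) = 0.
  by transitivity ((a * xi) * yj' - xi' * (a * yj)); [ring | rewrite exi eyj; ring].
have b_cross : b * (xi * yj' - xi' * yj) = 0.
  by transitivity (xi * (b * yj') - (b * xi') * yj); [ring | rewrite -exi -eyj; ring].
apply/eqP; rewrite -subr_eq0; case/orP: ab => [a_nz | b_nz].
- by move/eqP: a_cross; rewrite mulf_eq0 (negbTE a_nz).
- by move/eqP: b_cross; rewrite mulf_eq0 (negbTE b_nz).
Qed.

Lemma in_F_mul a b X Y : (a != 0) || (b != 0) ->
  in_F a b X -> in_F a b Y -> in_F a b (X *m Y).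
Proof.
move=> ab [x [-> Fx]] [y [-> Fy]].
have [w XYw] := (toeplitz_toep_mulP m x y).2 (F_cond_cross ab Fx Fy).
exists w; split => //; apply/F_cond_commP; rewrite -XYw.
move/F_cond_commP: Fx => cx; move/F_cond_commP: Fy => cy.
by rewrite -mulmxA cy mulmxA cx mulmxA.
Qed.

End ScalarToeplitzDomain.

Section BlockSlices.
Variables (R : nzRingType) (n d : nat).
Local Notation blk := (@blk_idx n.+1 d.+1).
Implicit Types X Y M : 'M[R]_(n.+1 * d.+1).

Definition blocks_diag M := forall p q r s, r != s -> M (blk p r) (blk q s) = 0.

Definition blk_slice M r : 'M[R]_n.+1 := \matrix_(p, q) M (blk p r) (blk q r).

Lemma blk_idx_bij : bijective (fun pr : 'I_n.+1 * 'I_d.+1 => blk pr.1 pr.2).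
Proof.
exists (fun i : 'I_(n.+1 * d.+1) => (inord (i %/ d.+1), inord (i %% d.+1))) => [[p r] | i] /=.
  congr pair; apply: val_inj; rewrite /= inordK;
    by rewrite ?divnMDl ?divn_small ?addn0 ?modnMDl ?modn_small.
apply: val_inj; rewrite /= !inordK -?divn_eq ?ltn_mod //.
by rewrite ltn_divLR // ltn_ord.
Qed.

Lemma mulmx_blkE X Y p r q s : (X *m Y) (blk p r) (blk q s) =
  \sum_(k < n.+1) \sum_(t < d.+1) X (blk p r) (blk k t) * Y (blk k t) (blk q s).
Proof.
rewrite mxE pair_big (reindex _ (onW_bij _ blk_idx_bij)) /=.
by apply: eq_bigr => -[].
Qed.

Lemma blocks_diag_mul X Y : blocks_diag X -> blocks_diag Y -> blocks_diag (X *m Y).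
Proof.
move=> Xd Yd p q r s rs; rewrite mulmx_blkE big1 // => k _; rewrite big1 // => t _.
by case: (eqVneq t r) => [->|tr]; [rewrite Yd // mulr0 | rewrite Xd ?mul0r // eq_sym].
Qed.

Lemma blk_slice_mul X Y r : blocks_diag X ->
  blk_slice (X *m Y) r = blk_slice X r *m blk_slice Y r.
Proof.
move=> Xd; apply/matrixP => p q; rewrite [LHS]mxE mulmx_blkE [RHS]mxE; apply: eq_bigr => k _.
by rewrite (bigD1 r) //= big1 ?addr0 ?mxE // => t tr; rewrite Xd ?mul0r // eq_sym.
Qed.

End BlockSlices.

Section DiagonalBlockToeplitz.
Variables (C : numClosedFieldType) (n d : nat).
Local Notation D := (@diag_alg C d.+1).
Implicit Types (X Y M : 'M[C]_(n.+1 * d.+1)) (T : int -> 'M[C]_d.+1) (a b : 'rV[C]_d.+1).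

Lemma int_diff_in_range (p q : 'I_n.+1) : - (n.+1%:Z - 1) <= p%:Z - q%:Z <= n.+1%:Z - 1.
Proof. have := ltn_ord p; have := ltn_ord q; lia. Qed.

Lemma block_toeplitz_slice T M r :
  block_toeplitz_with T M -> blk_slice M r = toep (fun k => T k r r).
Proof. by move=> TM; apply/matrixP => p q; rewrite !mxE TM. Qed.

Lemma block_toeplitz_blocks_diag T M :
  (forall j, - (n.+1%:Z - 1) <= j <= n.+1%:Z - 1 -> D (T j)) ->
  block_toeplitz_with T M -> blocks_diag M.
Proof.
move=> TD TM p q r s rs; rewrite TM.
by move/is_diag_mxP: (TD _ (int_diff_in_range p q)); apply.
Qed.

Lemma blocks_diag_block_toeplitz (t : 'I_d.+1 -> int -> C) M :
  blocks_diag M -> (forall r, blk_slice M r = toep (t r)) ->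
  block_toeplitz_with (fun k => diag_mx (\row_r t r k)) M.
Proof.
move=> Md Mt p q r s; rewrite !mxE; case: (eqVneq r s) => [<- | rs].
  by have := congr1 (fun N : 'M_n.+1 => N p q) (Mt r); rewrite !mxE.
by rewrite Md.
Qed.

Lemma toeplitz_inP M :
  toeplitz_in D M <-> blocks_diag M /\ forall r, toeplitz (blk_slice M r).
Proof.
split=> [[T [TD TM]] | [Md Mt]].
  split; first exact: block_toeplitz_blocks_diag TD TM.
  by move=> r; exists (fun k => T k r r); apply: block_toeplitz_slice.
have [t Mt'] := fin_all_exists Mt.
exists (fun k => diag_mx (\row_r t r k)); split; first by move=> j _; apply: diag_mx_is_diag.
exact: blocks_diag_block_toeplitz.
Qed.

Lemma F_setP a b M : F_set D (diag_mx a) (diag_mx b) M <->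
  blocks_diag M /\ forall r, in_F (a 0 r) (b 0 r) (blk_slice M r).
Proof.
split=> [[T [TD [TM TF]]] | [Md MF]].
  split; first exact: block_toeplitz_blocks_diag TD TM.
  move=> r; exists (fun k => T k r r); split; first exact: block_toeplitz_slice.
  move=> j /andP[j0 jn]; have := congr1 (fun X : 'M[C]_d.+1 => X r r) (TF j _).
  by rewrite !mul_diag_mx !mxE; apply; apply/andP; split; lia.
have [t Mt] := fin_all_exists MF.
exists (fun k => diag_mx (\row_r t r k)); split; first by move=> j _; apply: diag_mx_is_diag.
split; first by apply: blocks_diag_block_toeplitz => // r; case: (Mt r).
move=> j /andP[j0 jn]; apply/matrixP => r s; rewrite !mul_diag_mx !mxE !mulrnAr.
by congr (_ *+ _); case: (Mt r) => _; apply; apply/andP; split; lia.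
Qed.

Lemma F_set_algebra a b : (forall r, (a 0 r != 0) || (b 0 r != 0)) ->
  algebra_in (toeplitz_in (n:=n.+1) D) (F_set (n:=n.+1) D (diag_mx a) (diag_mx b)).
Proof.
move=> ab_nz; split; [|split; [|split]].
- by move=> M [T [TD [TM _]]]; exists T.
- exists (fun=> 0); split; first by move=> j _; apply: mx0_is_diag.
  by split=> [p q r s | j _]; rewrite ?mxE ?mulmx0.
- move=> c X Y [T [TD [TX TF]]] [U [UD [UY UF]]].
  exists (fun j => c *: T j + U j); split; [|split].
  + move=> j j_range; apply/is_diag_mxP => r s rs; rewrite !mxE.
    move/is_diag_mxP: (TD j j_range) => -> //; move/is_diag_mxP: (UD j j_range) => -> //.
    by rewrite mulr0 addr0.
  + by move=> p q r s; rewrite !mxE TX UY.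
  + by move=> j j_range; rewrite !mulmxDr -!scalemxAr TF // UF.
- move=> X Y /F_setP[Xd XF] /F_setP[Yd YF]; apply/F_setP.
  split; first exact: blocks_diag_mul.
  by move=> r; rewrite blk_slice_mul //; apply: in_F_mul.
Qed.

Lemma mul_closed_toeplitz_in_sub_F (Al : 'M[C]_(n.+1 * d.+1) -> Prop) :
  (forall X, Al X -> toeplitz_in D X) -> (forall X Y, Al X -> Al Y -> Al (X *m Y)) ->
  exists a b, (forall r, (a 0 r != 0) || (b 0 r != 0)) /\
    forall X, Al X -> F_set D (diag_mx a) (diag_mx b) X.
Proof.
move=> Al_sub Al_mul.
have slice_sub_F r : exists ab : C * C, ((ab.1 != 0) || (ab.2 != 0)) /\
    forall X, Al X -> in_F ab.1 ab.2 (blk_slice X r).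
  have [| |a [b [ab_nz abF]]] :=
    mul_closed_toeplitz_sub_F (S := fun N => exists2 X, Al X & N = blk_slice X r).
  - by move=> _ [X AlX ->]; case/toeplitz_inP: (Al_sub X AlX).
  - move=> _ _ [X AlX ->] [Y AlY ->].
    have /toeplitz_inP[_ XYt] := Al_sub _ (Al_mul X Y AlX AlY).
    have /toeplitz_inP[Xd _] := Al_sub X AlX.
    by rewrite -blk_slice_mul.
  - by exists (a, b); split => // X AlX; apply: abF; exists X.
have [ab abP] := fin_all_exists slice_sub_F.
exists (\row_r (ab r).1), (\row_r (ab r).2); split=> [r | X AlX].
  by rewrite !mxE; case: (abP r).
apply/F_setP; split; first by case/toeplitz_inP: (Al_sub X AlX).
by move=> r; rewrite !mxE; apply: (abP r).2.
Qed.

End DiagonalBlockToeplitz.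

Theorem corollary5p3 (C : numClosedFieldType) (n d : nat)
    (hn : (2 <= n)%N) (hd : (0 < d)%N)
    (Al : 'M[C]_(n * d) -> Prop) :
  maximal_algebra_in (@toeplitz_in C n d (@diag_alg C d)) Al ->
  exists A B : 'M[C]_d, diag_alg A /\ diag_alg B /\
    (forall M, Al M <-> @F_set C n d (@diag_alg C d) A B M).
Proof.
case: n hn Al => [//|n] _ Al; case: d hd Al => [//|d] _ Al.
move=> [[Al_sub [_ [_ Al_mul]]] Al_max].
have [a [b [ab_nz Al_F]]] := mul_closed_toeplitz_in_sub_F Al_sub Al_mul.
exists (diag_mx a), (diag_mx b); split; first exact: diag_mx_is_diag.
split; first exact: diag_mx_is_diag.
move=> M; split; first exact: Al_F.
by apply: (Al_max _ _ Al_F); apply: F_set_algebra.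
Qed.
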